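(* Let $n\ge2$, $A\in\mathbb{R}^{n\times d}$ with every row satisfying $\|A_{(i,:)}\|_2\le1$, $\mathcal{B}_d=\{\mathbf{w}\in\mathbb{R}^d:\|\mathbf{w}\|_2\le1\}$, $\alpha_t=1$, $g(\mathbf{w},\mathbf{p})=\mathbf{p}^{\top}A\mathbf{w}$, $h_t(\mathbf{w})=-g(\mathbf{w},\mathbf{p}_t)$, $\ell_t(\mathbf{p})=g(\mathbf{w}_t,\mathbf{p})$. Let $\widehat{\mathbf{w}}_0=\mathbf{0}$, $\widehat{\mathbf{p}}_0=\tfrac{\mathbf{1}}{n}$ and for $t=1,\dots,T$: $\mathbf{w}_t=\arg\min_{\mathbf{w}\in\mathcal{B}_d}\frac{1}{\sqrt{\log n}}\langle-A^{\top}\widehat{\mathbf{p}}_{t-1},\mathbf{w}\rangle+\frac12\|\mathbf{w}-\widehat{\mathbf{w}}_{t-1}\|_2^2$, $\mathbf{p}_t=\arg\min_{\mathbf{p}\in\Delta^n}\sqrt{\log n}\langle A\widehat{\mathbf{w}}_{t-1},\mathbf{p}\rangle+D_E(\mathbf{p},\widehat{\mathbf{p}}_{t-1})$, $\widehat{\mathbf{w}}_t=\arg\min_{\mathbf{w}\in\mathcal{B}_d}\frac{1}{\sqrt{\log n}}\langle-A^{\top}\mathbf{p}_t,\mathbf{w}\rangle+\frac12\|\mathbf{w}-\widehat{\mathbf{w}}_{t-1}\|_2^2$, $\widehat{\mathbf{p}}_t=\arg\min_{\mathbf{p}\in\Delta^n}\sqrt{\log n}\langle A\mathbf{w}_t,\mathbf{p}\rangle+D_E(\mathbf{p},\widehat{\mathbf{p}}_{t-1})$.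 Define $R^{\mathbf{w}}=\sum_{t=1}^Th_t(\mathbf{w}_t)-\min_{\mathbf{w}\in\mathcal{B}_d}\sum_{t=1}^Th_t(\mathbf{w})$ and $R^{\mathbf{p}}=\sum_{t=1}^T\ell_t(\mathbf{p}_t)-\min_{\mathbf{p}\in\Delta^n}\sum_{t=1}^T\ell_t(\mathbf{p})$. Then $R^{\mathbf{p}}+R^{\mathbf{w}}=O(\sqrt{\log n})$, i.e. there is a universal constant $C$ such that $R^{\mathbf{p}}+R^{\mathbf{w}}\le C\sqrt{\log n}$ for all $T$.
   Context: $\Delta^n$ is the probability simplex; $\mathbf{1}$ the all-ones vector; $D_E(\mathbf{p},\mathbf{q})=\sum_ip_i\log(p_i/q_i)$ (KL divergence). *)

From mathcomp Require Import all_boot all_order all_algebra.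
From mathcomp Require Import all_classical all_reals all_analysis.
Set Implicit Arguments. Unset Strict Implicit. Unset Printing Implicit Defensive.
Import Order.TTheory GRing.Theory Num.Theory.
Local Open Scope ring_scope.
Local Open Scope classical_set_scope.

Section Defs.
Variable R : realType.

Definition dotv {k : nat} (u v : 'cV[R]_k) : R := \sum_(i < k) u i 0 * v i 0.

Definition l2norm {m k : nat} (M : 'M[R]_(m, k)) : R :=
  Num.sqrt (\sum_(i < m) \sum_(j < k) M i j ^+ 2).

Definition ball2 (d : nat) : set 'cV[R]_d := [set w | l2norm w <= 1].

Definition simplex (n : nat) : set 'cV[R]_n :=
  [set p | (forall i, 0 <= p i 0) /\ \sum_(i < n) p i 0 = 1].

Definition KL {n : nat} (p q : 'cV[R]_n) : R :=
  \sum_(i < n) p i 0 * ln (p i 0 / q i 0).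

Arguments ball2 : clear implicits.
Arguments simplex : clear implicits.

Definition is_argmin {T : Type} (S : set T) (f : T -> R) (x : T) : Prop :=
  S x /\ forall y, S y -> f x <= f y.

Definition gpay {n d : nat} (A : 'M[R]_(n, d)) (w : 'cV[R]_d) (p : 'cV[R]_n) : R :=
  dotv p (A *m w).

Definition regret_w {n d : nat} (A : 'M[R]_(n, d)) (w : nat -> 'cV[R]_d)
  (p : nat -> 'cV[R]_n) (T : nat) : R :=
  \sum_(1 <= t < T.+1) (- gpay A (w t) (p t))
  - inf [set (\sum_(1 <= t < T.+1) (- gpay A v (p t))) | v in (ball2 d)].

Definition regret_p {n d : nat} (A : 'M[R]_(n, d)) (w : nat -> 'cV[R]_d)
  (p : nat -> 'cV[R]_n) (T : nat) : R :=
  \sum_(1 <= t < T.+1) gpay A (w t) (p t)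
  - inf [set (\sum_(1 <= t < T.+1) gpay A (w t) q) | q in (simplex n)].

End Defs.
Arguments ball2 {R} d _.
Arguments simplex {R} n _.

(** Both players run optimistic mirror descent: a Euclidean prox step on the
    ball with step size [1/s] and an entropic prox step on the simplex with step
    size [s], where [s = sqrt (log n)].  The three-point property of the two
    prox steps bounds the regret of one round against any comparator [(u, q)]
    by the decrease of the potential [s/2 |u - ŵ_t|^2 + KL(q, p̂_t)/s], plus two
    cross terms of the form [<P - Q, A (v - v')>].  Since the rows of [A] lie in
    the unit ball, such a term is at most [s/2 |v - v'|^2 + |P - Q|_1^2/(2 s)],
    and Pinsker's inequality [|P - Q|_1^2 <= 2 KL(P, Q)] lets the negative
    distance terms of the three-point inequalities absorb it.  Telescoping
    leaves the initial potential, at most [s/2 + log n / s = 3/2 sqrt (log n)]. *)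

From mathcomp Require Import all_boot all_order all_algebra.
From mathcomp Require Import all_classical all_reals all_analysis.
From mathcomp Require Import lra ring.
Set Implicit Arguments. Unset Strict Implicit. Unset Printing Implicit Defensive.
Import Order.TTheory GRing.Theory Num.Theory.
Local Open Scope ring_scope.

Ltac merge_sums :=
  do 4 rewrite ?mulr_sumr ?mulr_suml -?sumrN -?sumrB -?big_split /=.

Lemma amgm_scaled (R : realFieldType) (x y l : R) : 0 < l ->
  x * y <= (l * x ^+ 2 + y ^+ 2 / l) / 2.
Proof.
move=> l_gt0; rewrite -subr_ge0.
have -> : (l * x ^+ 2 + y ^+ 2 / l) / 2 - x * y = (l * x - y) ^+ 2 / (2 * l).
  by field; rewrite gt_eqF.
by rewrite divr_ge0 ?sqr_ge0 // ltW // mulr_gt0.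
Qed.

Lemma sqr_sum_normr_le (R : realFieldType) (I : finType) (a w : I -> R) :
    (forall i, 0 < w i) ->
  (\sum_i `|a i|) ^+ 2 <= (\sum_i w i) * \sum_i a i ^+ 2 / w i.
Proof.
move=> w_gt0; set D := \sum_i `|a i|; set W := \sum_i w i; set S := \sum_i _.
have S_ge0 : 0 <= S by apply: sumr_ge0 => i _; rewrite divr_ge0 ?sqr_ge0 ?ltW.
have W_ge0 : 0 <= W by apply: sumr_ge0 => i _; apply: ltW.
have [D0|D_neq0] := eqVneq D 0; first by rewrite D0 expr0n mulr_ge0.
have D_gt0 : 0 < D by rewrite lt_def D_neq0 sumr_ge0.
have W_gt0 : 0 < W.
  case: (pickP (fun _ : I => true)) => [i _|I0].
    by rewrite /W (bigD1 i) //= ltr_wpDr ?w_gt0 // sumr_ge0 // => j _; apply: ltW.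
  by move: D_neq0; rewrite /D big_pred0 ?eqxx.
(* Termwise AM-GM, with the scaling [W / D] that makes the sum of the bounds tight. *)
have term i : `|a i| <= (W / D / w i * a i ^+ 2 + w i / (W / D)) / 2.
  have := amgm_scaled `|a i| 1 (divr_gt0 (divr_gt0 W_gt0 D_gt0) (w_gt0 i)).
  by rewrite mulr1 real_normK ?num_real // expr1n mul1r invf_div.
have sum_terms :
    \sum_i (W / D / w i * a i ^+ 2 + w i / (W / D)) / 2 = (W / D * S + D) / 2.
  rewrite -mulr_suml big_split /= -mulr_suml -/W /S mulr_sumr; congr ((_ + _) / 2).
    by apply: eq_bigr => i _; rewrite mulrA mulrAC.
  by field; rewrite !gt_eqF.
have : D <= (W / D * S + D) / 2.
  by rewrite -sum_terms; apply: ler_sum => i _; apply: term.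
have : D * (W / D * S) = W * S by field; rewrite gt_eqF.
nra.
Qed.

Section ScalarPinsker.
Variable R : realType.
Implicit Types x y z : R.

Lemma ger0_is_derive_le (f df : R -> R) x y : x <= y ->
  (forall z, x <= z <= y -> is_derive z 1 f (df z)) ->
  (forall z, x < z < y -> 0 <= df z) -> f x <= f y.
Proof.
move=> xy fdf df_ge0.
have xitv : x \in `[x, y] by rewrite in_itv /= lexx xy.
have yitv : y \in `[x, y] by rewrite in_itv /= lexx xy.
apply: (@ger0_derive1_le_cc _ f x y) => //.
- by move=> z; rewrite in_itv /= => /andP[/ltW xz /ltW zy]; case: (fdf z); rewrite ?xz.
- move=> z; rewrite in_itv /= => /andP[xz zy]; rewrite derive1E.
  by case: (fdf z); rewrite ?(ltW xz) ?(ltW zy) // => _ ->; rewrite df_ge0 ?xz.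
- apply: derivable_within_continuous => z; rewrite in_itv /= => xzy.
  by case: (fdf z xzy).
Qed.

(* [gap y = y ln y - y + 1 - 3/2 (y - 1)^2 / (y + 2)], in partial fractions. *)
Let gap y := y * ln y - y + 1 - 3/2 * (y - 4 + 9 * (y + 2)^-1).
Let dgap y := ln y - 3/2 + 27/2 * (y + 2)^-1 ^+ 2.

Let is_derive_inv_add2 y : 0 < y ->
  is_derive y 1 (fun z => (z + 2)^-1) (- (y + 2) ^- 2).
Proof.
move=> y_gt0; have y2 : y + 2 != 0 by rewrite gt_eqF // ltr_wpDr // ltW.
apply: is_derive_eq (@is_deriveV R (fun z => z + 2) y _ _ y2
  (is_deriveD (is_derive_id y (1 : R)) (is_derive_cst (2 : R) y 1))) _.
by rewrite addr0 -[(_ : R) *: _]/(_ * _) mulr1.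
Qed.

Let is_derive_dgap y : 0 < y -> is_derive y 1 dgap (y^-1 - 27 / (y + 2) ^+ 3).
Proof.
move=> y_gt0; apply: is_derive_eq (is_deriveD (is_deriveB (is_derive1_ln y_gt0)
  (is_derive_cst (3/2 : R) y 1))
  (is_deriveZ (27/2 : R) (is_deriveX 2 (is_derive_inv_add2 y_gt0)))) _.
rewrite /= subr0 expr1 -![(_ : R) *: _]/(_ * _).
by field; rewrite !gt_eqF // ltr_wpDr // ltW.
Qed.

Let is_derive_gap y : 0 < y -> is_derive y 1 gap (dgap y).
Proof.
move=> y_gt0; apply: is_derive_eq (is_deriveB (is_deriveD (is_deriveB
  (is_deriveM (is_derive_id y (1 : R)) (is_derive1_ln y_gt0)) (is_derive_id y (1 : R)))
  (is_derive_cst (1 : R) y 1)) (is_deriveZ (3/2 : R) (is_deriveD (is_deriveB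
  (is_derive_id y (1 : R)) (is_derive_cst (4 : R) y 1))
  (is_deriveZ (9 : R) (is_derive_inv_add2 y_gt0))))) _.
rewrite /dgap /= addr0 subr0 -![(_ : R) *: _]/(_ * _).
by field; rewrite !gt_eqF // ltr_wpDr // ltW.
Qed.

Let dgap_nondecreasing x y : 0 < x -> x <= y -> dgap x <= dgap y.
Proof.
move=> x_gt0 xy; apply: ger0_is_derive_le xy _ _ => [z /andP[xz _]|z /andP[xz _]].
  exact/is_derive_dgap/(lt_le_trans x_gt0 xz).
have z_gt0 : 0 < z := lt_trans x_gt0 xz.
have z2_gt0 : 0 < z + 2 by rewrite ltr_wpDr // ltW.
have -> : z^-1 - 27 / (z + 2) ^+ 3 = (z - 1) ^+ 2 * (z + 8) / (z * (z + 2) ^+ 3).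
  by field; rewrite !gt_eqF.
apply: divr_ge0; apply: mulr_ge0; rewrite ?sqr_ge0 ?exprn_ge0 ?ltW //.
by rewrite ltr_wpDr // ltW.
Qed.

Let gap_ge0 y : 0 < y -> 0 <= gap y.
Proof.
move=> y_gt0; have gap1 : gap 1 = 0 by rewrite /gap ln1; field.
have dgap1 : dgap 1 = 0 by rewrite /dgap ln1; field.
rewrite -gap1; have [y_le1|y_gt1] := leP y 1.
- rewrite -lerN2.
  apply: (@ger0_is_derive_le (fun z => - gap z) (fun z => - dgap z)) y_le1 _ _.
    by move=> z /andP[yz _]; apply/is_deriveN/is_derive_gap/(lt_le_trans y_gt0 yz).
  move=> z /andP[yz z1].
  by rewrite oppr_ge0 -dgap1 dgap_nondecreasing ?(lt_trans y_gt0) // ltW.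
- apply: (@ger0_is_derive_le gap dgap) (ltW y_gt1) _ _.
    by move=> z /andP[z1 _]; apply/is_derive_gap/(lt_le_trans ltr01 z1).
  by move=> z /andP[z1 _]; rewrite -dgap1 dgap_nondecreasing // ltW.
Qed.

Lemma pinsker_term x y : 0 <= x -> 0 < y ->
  3/2 * (x - y) ^+ 2 / (x + 2 * y) <= x * ln (x / y) - x + y.
Proof.
move=> x_ge0 y_gt0; have w_gt0 : 0 < x + 2 * y by rewrite ltr_wpDl // mulr_gt0.
rewrite ler_pdivrMr //; have [->|x_neq0] := eqVneq x 0.
  by rewrite !mul0r !sub0r add0r sqrrN; nra.
have x_gt0 : 0 < x by rewrite lt_def x_neq0.
rewrite -subr_ge0.
have -> : (x * ln (x / y) - x + y) * (x + 2 * y) - 3/2 * (x - y) ^+ 2 =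
    y * (x + 2 * y) * gap (x / y) by rewrite /gap; field; rewrite !gt_eqF.
by rewrite mulr_ge0 ?gap_ge0 ?divr_gt0 // mulr_ge0 ?ltW.
Qed.

End ScalarPinsker.

Section Pinsker.
Variables (R : realType) (n : nat).
Implicit Types p q : 'cV[R]_n.

Definition l1dist p q : R := \sum_i `|p i 0 - q i 0|.

Lemma l1dist_ge0 p q : 0 <= l1dist p q.
Proof. by rewrite sumr_ge0. Qed.

Lemma l1dist_eq0 p q : l1dist p q = 0 -> p = q.
Proof.
move=> /(psumr_eq0P (fun i _ => normr_ge0 _)) pq; apply/matrixP => i j.
by rewrite (ord1 j); apply/eqP; rewrite -subr_eq0 -normr_eq0 pq.
Qed.

Lemma KL_simplexE p q : simplex n p -> simplex n q ->
  KL p q = \sum_i (p i 0 * ln (p i 0 / q i 0) - p i 0 + q i 0).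
Proof. by move=> [_ p1] [_ q1]; rewrite !big_split /= sumrN p1 q1 subrK. Qed.

Lemma pinsker p q : simplex n p -> simplex n q -> (forall i, 0 < q i 0) ->
  l1dist p q ^+ 2 <= 2 * KL p q.
Proof.
move=> pS qS q_gt0; have [p_ge0 p1] := pS; have [_ q1] := qS.
have w_gt0 i : 0 < p i 0 + 2 * q i 0 by rewrite ltr_wpDl ?mulr_gt0.
apply: le_trans (sqr_sum_normr_le _ w_gt0) _.
have -> : \sum_i (p i 0 + 2 * q i 0) = 3 by rewrite big_split /= -mulr_sumr p1 q1; ring.
rewrite KL_simplexE // !mulr_sumr; apply: ler_sum => i _.
have := pinsker_term (p_ge0 i) (q_gt0 i); lra.
Qed.

Lemma KL_ge0 p q : simplex n p -> simplex n q -> (forall i, 0 < q i 0) ->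
  0 <= KL p q.
Proof. by move=> pS qS q_gt0; have := pinsker pS qS q_gt0; nra. Qed.

Lemma KL_le0_eq p q : simplex n p -> simplex n q -> (forall i, 0 < q i 0) ->
  KL p q <= 0 -> p = q.
Proof.
move=> pS qS q_gt0 KL_le0; apply: l1dist_eq0; apply/eqP.
by rewrite -sqrf_eq0 eq_le sqr_ge0 andbT; have := pinsker pS qS q_gt0; lra.
Qed.

Lemma KLxx q : KL q q = 0.
Proof.
rewrite /KL big1 // => i _; have [->|qi0] := eqVneq (q i 0) 0; first by rewrite mul0r.
by rewrite divff // ln1 mulr0.
Qed.
End Pinsker.

Section Uniform.
Variables (R : realType) (n : nat).
Hypothesis n_gt0 : (0 < n)%N.

Lemma uniform_simplex : simplex n (const_mx n%:R^-1 : 'cV[R]_n).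
Proof.
split=> [i|]; first by rewrite mxE invr_ge0 ler0n.
under eq_bigr do rewrite mxE.
by rewrite sumr_const card_ord -[_ *+ n]mulr_natl divff // pnatr_eq0 -lt0n.
Qed.

Lemma uniform_gt0 i : 0 < (const_mx n%:R^-1 : 'cV[R]_n) i 0.
Proof. by rewrite mxE invr_gt0 ltr0n. Qed.

Lemma KL_uniform_le (q : 'cV[R]_n) :
  simplex n q -> KL q (const_mx n%:R^-1) <= ln n%:R.
Proof.
move=> [q_ge0 q1].
have -> : ln n%:R = \sum_i q i 0 * ln n%:R :> R by rewrite -mulr_suml q1 mul1r.
apply: ler_sum => i _.
rewrite mxE invrK; have [->|qi0] := eqVneq (q i 0) 0; first by rewrite !mul0r.
have qi_gt0 : 0 < q i 0 by rewrite lt_def qi0 q_ge0.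
have qi_le1 : q i 0 <= 1 by rewrite -q1 (bigD1 i) //= lerDl sumr_ge0.
rewrite lnM ?posrE ?ltr0n // mulrDr gerDr.
by rewrite mulr_ge0_le0 ?ln_le0 // ltW.
Qed.

End Uniform.

Lemma ge0_of_perturbed_ge0 (R : realFieldType) (b k : R) : 0 <= k ->
  (forall e, 0 < e -> e <= 1 -> 0 <= b + e * k) -> 0 <= b.
Proof.
move=> k_ge0 bk; rewrite leNgt; apply/negP => b_lt0.
have kb : 0 < k - b by lra.
have e_gt0 : 0 < - b / (k - b) by rewrite divr_gt0 // oppr_gt0.
have e_le1 : - b / (k - b) <= 1 by rewrite ler_pdivrMr // mul1r; lra.
have := bk _ e_gt0 e_le1.
have -> : b + - b / (k - b) * k = - (b ^+ 2 / (k - b)) by field; rewrite gt_eqF.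
have : 0 < b ^+ 2 / (k - b) by rewrite divr_gt0 // expr2 nmulr_rgt0.
lra.
Qed.

Section EuclideanBall.
Variables (R : realType) (d : nat).
Implicit Types u v x y a : 'cV[R]_d.

Definition sqnorm v : R := \sum_i v i 0 ^+ 2.

Lemma sqnorm_ge0 v : 0 <= sqnorm v.
Proof. by apply: sumr_ge0 => i _; apply: sqr_ge0. Qed.

Lemma l2norm_sqr v : l2norm v ^+ 2 = sqnorm v.
Proof.
rewrite sqr_sqrtr; first by apply: eq_bigr => i _; rewrite big_ord1.
by rewrite sumr_ge0 // => i _; rewrite sumr_ge0 // => j _; apply: sqr_ge0.
Qed.

Lemma ball2E v : ball2 d v <-> sqnorm v <= 1.
Proof. by rewrite /ball2 /= -l2norm_sqr expr_le1 // sqrtr_ge0. Qed.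

Lemma ball2_convex x u e : ball2 d x -> ball2 d u -> 0 <= e -> e <= 1 ->
  ball2 d (x + e *: (u - x)).
Proof.
rewrite !ball2E => x1 u1 e0 e1.
have : sqnorm (x + e *: (u - x)) <= (1 - e) * sqnorm x + e * sqnorm u.
  rewrite /sqnorm !mulr_sumr -big_split /=; apply: ler_sum => i _; rewrite !mxE.
  rewrite -subr_ge0.
  have -> : (1 - e) * x i 0 ^+ 2 + e * u i 0 ^+ 2 - (x i 0 + e * (u i 0 - x i 0)) ^+ 2
      = e * (1 - e) * (u i 0 - x i 0) ^+ 2 by ring.
  by rewrite mulr_ge0 ?sqr_ge0 // mulr_ge0 // subr_ge0.
nra.
Qed.

Lemma ball2_prox_le a y x u (c : R) : 0 < c ->
  is_argmin (ball2 d) (fun v => c * dotv a v + 2^-1 * l2norm (v - y) ^+ 2) x ->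
  ball2 d u ->
  dotv a x - dotv a u <= c^-1 * ((sqnorm (u - y) - sqnorm (u - x) - sqnorm (x - y)) / 2).
Proof.
move=> c_gt0 [xB xmin] uB.
set B := c * (dotv a u - dotv a x) + \sum_i (x i 0 - y i 0) * (u i 0 - x i 0).
have polar : \sum_i (x i 0 - y i 0) * (u i 0 - x i 0) =
    (sqnorm (u - y) - sqnorm (u - x) - sqnorm (x - y)) / 2.
  by rewrite /sqnorm; merge_sums; apply: eq_bigr => i _; rewrite !mxE; field.
have first_order e : 0 < e -> e <= 1 -> 0 <= B + e * (sqnorm (u - x) / 2).
  move=> e_gt0 e_le1; have := xmin _ (ball2_convex xB uB (ltW e_gt0) e_le1).
  rewrite !l2norm_sqr -subr_ge0.
  have -> : c * dotv a (x + e *: (u - x)) + 2^-1 * sqnorm (x + e *: (u - x) - y)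
      - (c * dotv a x + 2^-1 * sqnorm (x - y)) = e * (B + e * (sqnorm (u - x) / 2)).
    by rewrite /B /dotv /sqnorm; merge_sums; apply: eq_bigr => i _; rewrite !mxE; field.
  by rewrite pmulr_rge0.
have := ge0_of_perturbed_ge0 (divr_ge0 (sqnorm_ge0 (u - x)) (ler0n _ 2)) first_order.
by rewrite ler_pdivlMl // -polar /B; lra.
Qed.

End EuclideanBall.

Section EntropicProx.
Variables (R : realType) (n : nat).
Implicit Types a q x y u : 'cV[R]_n.

Definition gibbs_weight y a (c : R) i : R := y i 0 * expR (- (c * a i 0)).
Definition gibbs_norm y a (c : R) : R := \sum_i gibbs_weight y a c i.
Definition gibbs y a (c : R) : 'cV[R]_n :=
  \col_i (gibbs_weight y a c i / gibbs_norm y a c).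

Variables (y a : 'cV[R]_n) (c : R).
Hypotheses (yS : simplex n y) (y_gt0 : forall i, 0 < y i 0).

Let weight_gt0 i : 0 < gibbs_weight y a c i.
Proof. by rewrite mulr_gt0 ?expR_gt0. Qed.

Let norm_gt0 : 0 < gibbs_norm y a c.
Proof.
case: (pickP (fun _ : 'I_n => true)) => [i _|n0].
  by rewrite /gibbs_norm (bigD1 i) //= ltr_wpDr // sumr_ge0 // => j _; apply: ltW.
by case: yS => _; rewrite big_pred0 // => /eqP; rewrite eq_sym oner_eq0.
Qed.

Lemma gibbs_gt0 i : 0 < gibbs y a c i 0.
Proof. by rewrite mxE; apply: divr_gt0 (weight_gt0 i) norm_gt0. Qed.

Lemma gibbs_simplex : simplex n (gibbs y a c).
Proof.
split=> [i|]; first exact/ltW/gibbs_gt0.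
under eq_bigr do rewrite mxE.
by rewrite -mulr_suml divff // gt_eqF.
Qed.

Lemma KL_gibbsE q : simplex n q ->
  c * dotv a q + KL q y = KL q (gibbs y a c) - ln (gibbs_norm y a c).
Proof.
move=> [q_ge0 q1].
have -> : ln (gibbs_norm y a c) = \sum_i q i 0 * ln (gibbs_norm y a c).
  by rewrite -mulr_suml q1 mul1r.
rewrite /dotv /KL; merge_sums; apply: eq_bigr => i _.
have [->|qi0] := eqVneq (q i 0) 0; first by rewrite !mul0r !mulr0 subrr addr0.
have qi_gt0 : 0 < q i 0 by rewrite lt_def qi0 q_ge0.
rewrite mxE !ln_div ?posrE ?divr_gt0 //.
by rewrite /gibbs_weight lnM ?posrE ?expR_gt0 // expRK; ring.
Qed.

Lemma simplex_prox_gibbs x :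
  is_argmin (simplex n) (fun q => c * dotv a q + KL q y) x -> x = gibbs y a c.
Proof.
move=> [xS xmin]; have := xmin _ gibbs_simplex.
rewrite (KL_gibbsE xS) (KL_gibbsE gibbs_simplex) KLxx => KL_le0.
by apply: KL_le0_eq xS gibbs_simplex gibbs_gt0 _; lra.
Qed.

Lemma simplex_prox_gt0 x :
  is_argmin (simplex n) (fun q => c * dotv a q + KL q y) x -> forall i, 0 < x i 0.
Proof. by move=> /simplex_prox_gibbs ->; apply: gibbs_gt0. Qed.

Lemma simplex_prox_eq x u : c != 0 ->
  is_argmin (simplex n) (fun q => c * dotv a q + KL q y) x -> simplex n u ->
  dotv a x - dotv a u = c^-1 * (KL u y - KL u x - KL x y).
Proof.
move=> c0 xprox uS; have [xS _] := xprox; rewrite (simplex_prox_gibbs xprox) in xS *.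
apply: (mulfI c0); rewrite mulrA mulfV // mul1r.
have := KL_gibbsE uS; have := KL_gibbsE gibbs_simplex; rewrite KLxx; lra.
Qed.

End EntropicProx.

Section Payoff.
Variables (R : realType) (n d : nat) (A : 'M[R]_(n, d)).
Implicit Types (v : 'cV[R]_d) (P Q : 'cV[R]_n).

Lemma dotvN_trmx Q v : dotv (- (A^T *m Q)) v = - gpay A v Q.
Proof.
rewrite /gpay /dotv.
under eq_bigr => j _ do rewrite !mxE mulNr mulr_suml.
rewrite sumrN exchange_big /=; congr (- _); apply: eq_bigr => i _.
by rewrite mxE mulr_sumr; apply: eq_bigr => j _; rewrite !mxE; ring.
Qed.

Lemma dotv_mulmx v Q : dotv (A *m v) Q = gpay A v Q.
Proof. by apply: eq_bigr => i _; rewrite mulrC. Qed.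

Lemma gpay_cross P Q v v' :
  gpay A v P - gpay A v Q - gpay A v' P + gpay A v' Q = dotv (P - Q) (A *m (v - v')).
Proof.
by rewrite mulmxBr /gpay /dotv; merge_sums; apply: eq_bigr => i _; rewrite !mxE; ring.
Qed.

Hypothesis A_rows : forall i, l2norm (row i A) <= 1.

Lemma normr_mulmx_le v i l : 0 < l ->
  `|(A *m v) i 0| <= (l + sqnorm v / l) / 2.
Proof.
move=> l_gt0; rewrite mxE; apply: le_trans (ler_norm_sum _ _ _) _.
have rowi : \sum_j A i j ^+ 2 <= 1.
  move: (A_rows i); rewrite /l2norm big_ord1 -{1}sqrtr1 ler_sqrt //.
  by under eq_bigr do rewrite mxE.
have term j : `|A i j * v j 0| <= (l * A i j ^+ 2 + v j 0 ^+ 2 / l) / 2.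
  rewrite normrM -(real_normK (num_real (A i j))) -(real_normK (num_real (v j 0))).
  exact: amgm_scaled.
apply: le_trans (ler_sum _ (fun j _ => term j)) _.
rewrite -mulr_suml big_split /= -mulr_sumr -mulr_suml ler_pM2r // lerD2r.
by rewrite -[leRHS]mulr1 ler_pM2l.
Qed.

Lemma normr_dotv_mulmx_le P Q v s : 0 < s ->
  `|dotv (P - Q) (A *m v)| <= s / 2 * sqnorm v + l1dist P Q ^+ 2 / (2 * s).
Proof.
move=> s_gt0; set c := l1dist P Q; have [c0|c_neq0] := eqVneq c 0.
  rewrite (l1dist_eq0 c0) subrr /dotv big1 => [|i _]; last by rewrite mxE mul0r.
  by rewrite normr0 c0 expr0n /= mul0r addr0 mulr_ge0 ?sqnorm_ge0 ?divr_ge0 ?ltW.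
have c_gt0 : 0 < c by rewrite lt_def c_neq0 l1dist_ge0.
have term i : `|(P - Q) i 0 * (A *m v) i 0| <=
    `|P i 0 - Q i 0| * ((c / s + sqnorm v / (c / s)) / 2).
  rewrite normrM [(P - Q) i 0]mxE [(- Q) i 0]mxE ler_wpM2l //.
  exact/normr_mulmx_le/divr_gt0.
apply: le_trans (ler_norm_sum _ _ _) _; apply: le_trans (ler_sum _ (fun i _ => term i)) _.
rewrite -mulr_suml -/(l1dist P Q) -/c.
have -> : c * ((c / s + sqnorm v / (c / s)) / 2) = s / 2 * sqnorm v + c ^+ 2 / (2 * s).
  by field; rewrite !gt_eqF.
exact: lexx.
Qed.

Lemma gpay_cross_le P Q v v' s : 0 < s -> simplex n P -> simplex n Q ->
    (forall i, 0 < Q i 0) ->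
  `|gpay A v P - gpay A v Q - gpay A v' P + gpay A v' Q| <=
    s / 2 * sqnorm (v - v') + s^-1 * KL P Q.
Proof.
move=> s_gt0 PS QS Q_gt0; rewrite gpay_cross.
apply: le_trans (normr_dotv_mulmx_le _ _ _ s_gt0) _; rewrite lerD2l.
have -> : l1dist P Q ^+ 2 / (2 * s) = s^-1 * (l1dist P Q ^+ 2 / 2).
  by field; rewrite gt_eqF.
apply: ler_wpM2l; first by rewrite invr_ge0 ltW.
by rewrite ler_pdivrMr // mulrC pinsker.
Qed.

End Payoff.

Lemma lb_le_inf_add (R : realType) (X Y : Type) (SX : set X) (SY : set Y)
    (f : X -> R) (g : Y -> R) (a : R) x0 y0 : SX x0 -> SY y0 ->
  (forall x y, SX x -> SY y -> a <= f x + g y) ->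
  a <= inf [set f x | x in SX] + inf [set g y | y in SY].
Proof.
move=> x0S y0S fg; rewrite -lerBlDl; apply: lb_le_inf; first by exists (g y0), y0.
move=> _ [y yS <-]; rewrite lerBlDl addrC -lerBlDl.
by apply: lb_le_inf => [|_ [x xS <-]]; [exists (f x0), x0 | rewrite lerBlDr fg].
Qed.

Section OptimisticMirrorDescent.
Variables (R : realType) (n d : nat) (A : 'M[R]_(n, d)) (s : R).
Variables (w wh : nat -> 'cV[R]_d) (p ph : nat -> 'cV[R]_n).
Hypotheses (n_gt0 : (0 < n)%N) (s_gt0 : 0 < s).
Hypothesis A_rows : forall i, l2norm (row i A) <= 1.
Hypotheses (wh0 : wh 0%N = 0) (ph0 : ph 0%N = const_mx n%:R^-1).
Hypothesis w_prox : forall t, is_argmin (ball2 d)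
  (fun v => s^-1 * dotv (- (A^T *m ph t)) v + 2^-1 * l2norm (v - wh t) ^+ 2) (w t.+1).
Hypothesis p_prox : forall t, is_argmin (simplex n)
  (fun q => s * dotv (A *m wh t) q + KL q (ph t)) (p t.+1).
Hypothesis wh_prox : forall t, is_argmin (ball2 d)
  (fun v => s^-1 * dotv (- (A^T *m p t.+1)) v + 2^-1 * l2norm (v - wh t) ^+ 2) (wh t.+1).
Hypothesis ph_prox : forall t, is_argmin (simplex n)
  (fun q => s * dotv (A *m w t.+1) q + KL q (ph t)) (ph t.+1).

Lemma ph_simplex t : simplex n (ph t).
Proof.
by case: t => [|t]; [rewrite ph0; apply: uniform_simplex | case: (ph_prox t)].
Qed.

Lemma ph_gt0 t i : 0 < ph t i 0.
Proof.
elim: t i => [|t IH] i; first by rewrite ph0 uniform_gt0.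
exact: (simplex_prox_gt0 (ph_simplex t) IH (ph_prox t) i).
Qed.

Lemma p_gt0 t i : 0 < p t.+1 i 0.
Proof. exact: (simplex_prox_gt0 (ph_simplex t) (ph_gt0 t) (p_prox t) i). Qed.

Definition potential u q t := s / 2 * sqnorm (u - wh t) + s^-1 * KL q (ph t).

Lemma round_le u q t : ball2 d u -> simplex n q ->
  gpay A u (p t.+1) - gpay A (w t.+1) q <= potential u q t - potential u q t.+1.
Proof.
move=> uB qS; have s_neq0 : s != 0 by rewrite gt_eqF.
have si_gt0 : 0 < s^-1 by rewrite invr_gt0.
have w_step := ball2_prox_le si_gt0 (w_prox t) (wh_prox t).1.
have wh_step := ball2_prox_le si_gt0 (wh_prox t) uB.
have p_step :=
  simplex_prox_eq (ph_simplex t) (ph_gt0 t) s_neq0 (p_prox t) (ph_simplex t.+1).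
have ph_step := simplex_prox_eq (ph_simplex t) (ph_gt0 t) s_neq0 (ph_prox t) qS.
rewrite invrK !dotvN_trmx in w_step wh_step; rewrite !dotv_mulmx in p_step ph_step.
have /ler_normlP[_ cross_w] := gpay_cross_le A_rows (wh t.+1) (w t.+1) s_gt0
  (p_prox t).1 (ph_simplex t) (ph_gt0 t).
have /ler_normlP[cross_wh _] := gpay_cross_le A_rows (w t.+1) (wh t) s_gt0
  (ph_simplex t.+1) (p_prox t).1 (p_gt0 t).
rewrite /potential; lra.
Qed.

Lemma regret_sum_le u q T : ball2 d u -> simplex n q ->
  \sum_(1 <= t < T.+1) (gpay A u (p t) - gpay A (w t) q) <= s / 2 + s^-1 * ln n%:R.
Proof.
move=> uB qS; rewrite big_add1 /=.
apply: le_trans (ler_sum _ (fun t _ => round_le t uB qS)) _.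
rewrite (telescope_sumr_eq (fun t => - potential u q t)) // => [|t _]; last first.
  by rewrite opprK addrC.
have s2_ge0 : 0 <= s / 2 by rewrite divr_ge0 ?ltW.
have si_ge0 : 0 <= s^-1 by rewrite invr_ge0 ltW.
have := ler_wpM2l s2_ge0 (iffLR (ball2E u) uB).
have := ler_wpM2l si_ge0 (KL_uniform_le n_gt0 qS).
have := mulr_ge0 s2_ge0 (sqnorm_ge0 (u - wh T)).
have := mulr_ge0 si_ge0 (KL_ge0 qS (ph_simplex T) (ph_gt0 T)).
rewrite /potential wh0 subr0 ph0; lra.
Qed.

Lemma regret_le T :
  regret_p A w p T + regret_w A w p T <= s / 2 + s^-1 * ln n%:R.
Proof.
have ball0 : ball2 d (0 : 'cV[R]_d).
  by apply/ball2E; rewrite /sqnorm big1 // => i _; rewrite mxE expr0n.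
have : - (s / 2 + s^-1 * ln n%:R) <=
    inf [set \sum_(1 <= t < T.+1) gpay A (w t) q | q in simplex n]
    + inf [set \sum_(1 <= t < T.+1) - gpay A v (p t) | v in ball2 d].
  apply: lb_le_inf_add (ph_simplex 0) ball0 _ => q u qS uB.
  by have := regret_sum_le T uB qS; rewrite sumrB sumrN; lra.
rewrite /regret_p /regret_w sumrN; lra.
Qed.

End OptimisticMirrorDescent.

Theorem proposition3 (R : realType) :
  exists C : R, forall (n d : nat) (A : 'M[R]_(n, d))
    (w wh : nat -> 'cV[R]_d) (p ph : nat -> 'cV[R]_n),
    (2 <= n)%N ->
    (forall i : 'I_n, l2norm (row i A) <= 1) ->
    wh 0%N = 0 ->
    ph 0%N = const_mx (n%:R^-1) ->
    (forall t : nat,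
       is_argmin (ball2 d)
         (fun v => (Num.sqrt (ln n%:R))^-1 * dotv (- (A^T *m ph t)) v
                   + 2^-1 * l2norm (v - wh t) ^+ 2) (w t.+1)) ->
    (forall t : nat,
       is_argmin (simplex n)
         (fun q => Num.sqrt (ln n%:R) * dotv (A *m wh t) q + KL q (ph t))
         (p t.+1)) ->
    (forall t : nat,
       is_argmin (ball2 d)
         (fun v => (Num.sqrt (ln n%:R))^-1 * dotv (- (A^T *m p t.+1)) v
                   + 2^-1 * l2norm (v - wh t) ^+ 2) (wh t.+1)) ->
    (forall t : nat,
       is_argmin (simplex n)
         (fun q => Num.sqrt (ln n%:R) * dotv (A *m w t.+1) q + KL q (ph t))
         (ph t.+1)) ->
    forall T : nat,
      regret_p A w p T + regret_w A w p T <= C * Num.sqrt (ln n%:R).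
Proof.
exists (3 / 2) => n d A w wh p ph n_ge2 A_rows wh0 ph0 w_prox p_prox wh_prox ph_prox.
move=> T.
have ln_gt0 : 0 < ln n%:R :> R by rewrite ln_gt0 // ltr1n.
set s := Num.sqrt (ln n%:R).
have s_gt0 : 0 < s by rewrite sqrtr_gt0.
apply: le_trans (regret_le (ltnW n_ge2) s_gt0 A_rows wh0 ph0
  w_prox p_prox wh_prox ph_prox T) _.
have -> : ln n%:R = s ^+ 2 by rewrite sqr_sqrtr // ltW.
have -> : s / 2 + s^-1 * s ^+ 2 = 3 / 2 * s by field; rewrite gt_eqF.
exact: lexx.
Qed.
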